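(* For every ideal $\mathcal I$ on $\omega$ and every cardinal $\kappa$, each of the classes $(\mathcal I\text{-p},\mathcal I\text{-}\sigma\text{-u})$, $(\mathcal I\text{-p},\mathcal I\text{-qn})$ and $(\mathcal I\text{-qn},\mathcal I\text{-}\sigma\text{-u})$ contains a space of cardinality $\kappa$.
   Context: An ideal on $\omega$ is a family $\mathcal I\subseteq\mathcal P(\omega)$ closed under finite unions and subsets, containing all finite sets, with $\omega\notin\mathcal I$. A real sequence $(a_n)$ is $\mathcal I$-convergent to $0$ if $\{n:|a_n|\ge\varepsilon\}\in\mathcal I$ for all $\varepsilon>0$. For a sequence $(f_n)$ of real functions on a set $X$: $\mathcal I$-p means $(f_n(x))$ is $\mathcal I$-convergent to $0$ for each $x$; $\mathcal I$-u means $\{n:\exists x\in X\,(|f_n(x)|\ge\varepsilon)\}\in\mathcal I$ for each $\varepsilon>0$; $\mathcal I$-$\sigma$-u means $X=\bigcup_{k\in\omega}X_k$ with $(f_n\restriction X_k)$ $\mathcal I$-u convergent to $0$ for each $k$; $\mathcal I$-qn means there is a sequence $(\varepsilon_n)$ of positive reals $\mathcal I$-convergent to $0$ with $\{n:|f_n(x)|\ge\varepsilon_n\}\in\mathcal I$ for each $x$. $\mathcal C(X)$ = continuous real functions on $X$. Normal space = Hausdorff space in which disjoint closed sets have disjoint open neighbourhoods. $(\alpha,\beta)$ is the class of normal spaces $X$ such that for all sequences $(f_n)$ in $\mathcal C(X)$, $f_n\to0$ in sense $\alpha$ iff in sense $\beta$. *)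

From HB Require Import structures.
From mathcomp Require Import all_boot all_order all_algebra.
From mathcomp Require Import all_classical all_reals all_analysis.
From mathcomp Require Import Rstruct Rstruct_topology.
From Stdlib Require Import Rdefinitions.
Set Implicit Arguments. Unset Strict Implicit. Unset Printing Implicit Defensive.
Import Order.TTheory GRing.Theory Num.Theory.
Local Open Scope classical_set_scope.
Local Open Scope ring_scope.

Notation Real := Rdefinitions.R.

Definition is_ideal (I : set (set nat)) : Prop :=
  [/\ (forall A B, I A -> I B -> I (A `|` B)),
      (forall A B, B `<=` A -> I A -> I B),
      (forall A, finite_set A -> I A)
    & ~ I setT].

Definition Iconv0 (I : set (set nat)) (a : nat -> Real) : Prop :=
  forall e : Real, 0 < e -> I [set n | e <= `|a n|].

Definition I_p (I : set (set nat)) (X : Type) (f : nat -> X -> Real) : Prop :=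
  forall x, Iconv0 I (fun n => f n x).

Definition I_u_on (I : set (set nat)) (X : Type) (A : set X)
  (f : nat -> X -> Real) : Prop :=
  forall e : Real, 0 < e -> I [set n | exists2 x, A x & e <= `|f n x|].

Definition I_sigma_u (I : set (set nat)) (X : Type) (f : nat -> X -> Real) : Prop :=
  exists Xk : nat -> set X,
    \bigcup_k Xk k = setT /\ forall k, I_u_on I (Xk k) f.

Definition I_qn (I : set (set nat)) (X : Type) (f : nat -> X -> Real) : Prop :=
  exists eps : nat -> Real,
    [/\ forall n, 0 < eps n, Iconv0 I eps &
        forall x, I [set n | eps n <= `|f n x|]].

Definition normal_T2 (X : topologicalType) : Prop :=
  hausdorff_space X /\
  forall A B : set X, closed A -> closed B -> A `&` B = set0 ->
    exists U V : set X, [/\ open U, open V, A `<=` U, B `<=` V & U `&` V = set0].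

Definition in_class
  (alpha beta : forall X : Type, (nat -> X -> Real) -> Prop)
  (X : topologicalType) : Prop :=
  normal_T2 X /\
  forall f : nat -> X -> Real, (forall n, continuous (f n)) ->
    (alpha X f <-> beta X f).

Definition same_card (X K : Type) : Prop := exists g : X -> K, bijective g.

(* On a pointed set T, the Fortissimo topology (a set is open iff it misses the
   particular point or has countable complement) is normal, and a continuous
   real function on it differs from its value at the particular point only on
   a countable set.  Hence a sequence (f_n) of continuous functions has only
   countably many traces (f_n x)_n.  For such a sequence, I-pointwise
   convergence implies I-sigma-uniform convergence (group the points by their
   trace) and I-quasinormal convergence (a single diagonal rate eps_n beats
   each of the countably many traces outside a set in I); the converse
   implications hold on every space.  The empty set is covered by the discrete
   topology. *)

From mathcomp Require Import all_boot all_order all_algebra.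
From mathcomp Require Import all_classical all_reals all_analysis.
From mathcomp Require Import Rstruct Rstruct_topology.
From HB Require Import structures.
From mathcomp Require Import lra.
Set Implicit Arguments. Unset Strict Implicit. Unset Printing Implicit Defensive.
Import Order.TTheory GRing.Theory Num.Theory numFieldNormedType.Exports.
Local Open Scope classical_set_scope.
Local Open Scope ring_scope.

Lemma countable_setU T (A B : set T) :
  countable A -> countable B -> countable (A `|` B).
Proof.
by move=> cA cB; rewrite -bigcup2E; apply: bigcup_countable => // -[|[|]].
Qed.

Lemma harmonic_lt_eventually (e : Real) :
  0 < e -> exists N, forall n, (N <= n)%N -> harmonic n < e.
Proof.
move=> e0; have [N _ hN] := cvgr_distC_lt _ _ (@cvg_harmonic Real) _ e0.
by exists N => n /hN; rewrite subr0 ger0_norm // harmonic_ge0.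
Qed.

Section ideal.
Variable I : set (set nat).
Hypothesis hI : is_ideal I.

Lemma idealS A B : I B -> A `<=` B -> I A.
Proof. by case: hI => _ sub _ _ IB AB; exact: sub IB. Qed.

Lemma idealU A B : I A -> I B -> I (A `|` B).
Proof. by case: hI => + _ _ _; apply. Qed.

Lemma ideal_finite A : finite_set A -> I A.
Proof. by case: hI => _ _ + _; apply. Qed.

Lemma ideal_bigsetU N (A : nat -> set nat) :
  (forall k, I (A k)) -> I (\big[setU/set0]_(k < N) A k).
Proof.
by move=> IA; apply: big_ind => //; [exact: ideal_finite | exact: idealU].
Qed.

End ideal.

Section majorant.
Variables (I : set (set nat)) (a : nat -> nat -> Real).
Hypotheses (hI : is_ideal I) (a_Iconv0 : forall k, Iconv0 I (a k)).

(* Capping |a_k n| by 1/(k+1) keeps the maximum I-convergent, while for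
   n >= k it still exceeds every |a_k n| below the cap. *)
Definition majorant (n : nat) : Real :=
  \big[Num.max/0]_(k < n.+1) Num.min `|a k n| (harmonic k) + harmonic n.

Lemma majorant_gt0 n : 0 < majorant n.
Proof. exact: ltr_wpDl (bigmax_ge_id _ _ _ _) (harmonic_gt0 n). Qed.

Lemma majorant_gt k n :
  (k <= n)%N -> `|a k n| < harmonic k -> `|a k n| < majorant n.
Proof.
move=> kn akn; apply: ltr_pwDr (harmonic_gt0 n) _.
apply: (bigmax_sup (Ordinal (kn : (k < n.+1)%N))) => //.
by rewrite le_min lexx ltW.
Qed.

Lemma majorant_attained n :
  exists2 k, (k <= n)%N & majorant n = Num.min `|a k n| (harmonic k) + harmonic n.
Proof.
have min_ge0 (k : 'I_n.+1) : true -> 0 <= Num.min `|a k n| (harmonic k).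
  by rewrite le_min normr_ge0 harmonic_ge0.
have [k _ eq_k] := eq_bigmax ord0 (fun=> true) _ isT min_ge0.
by exists k; [rewrite -ltnS | rewrite /majorant; congr (_ + _); exact: eq_k].
Qed.

Lemma majorant_dominates k : I [set n | majorant n <= `|a k n|].
Proof.
apply: (idealS hI (idealU hI (ideal_finite hI (finite_II k))
  (a_Iconv0 k (harmonic_gt0 k)))).
move=> n /= le_an; have [nk|kn] := ltnP n k; [by left | right].
by rewrite leNgt; apply/negP => /(majorant_gt kn); rewrite ltNge le_an.
Qed.

Lemma majorant_Iconv0 : Iconv0 I majorant.
Proof.
move=> e e0; have e20 : 0 < e / 2 by rewrite divr_gt0.
have [N hN] := harmonic_lt_eventually e20.
have small m : e / 2 <= harmonic m -> (m < N)%N.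
  by rewrite ltnNge; apply: contraTN => /hN; rewrite ltNge.
apply: (idealS hI (idealU hI (ideal_finite hI (finite_II N))
  (ideal_bigsetU hI N (fun k => a_Iconv0 k e20)))).
move=> n /=; rewrite ger0_norm; last exact/ltW/majorant_gt0.
have [k _ ->] := majorant_attained n.
have [hn|hn] := lerP (e / 2) (harmonic n); first by left; exact: small.
move=> le_e; have : e / 2 <= Num.min `|a k n| (harmonic k) by lra.
rewrite le_min => /andP[le_ak le_hk]; right.
exact: (bigsetU_sup (F := fun k => [set n | e / 2 <= `|a k n|]) (small _ le_hk)).
Qed.

End majorant.

Lemma countable_Iconv0_majorant (I : set (set nat)) (A : set (nat -> Real)) :
  is_ideal I -> countable A -> (forall a, A a -> Iconv0 I a) ->
  exists eps : nat -> Real, [/\ forall n, 0 < eps n, Iconv0 I eps &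
    forall a, A a -> I [set n | eps n <= `|a n|]].
Proof.
move=> hI /pcard_surjP[b A_b] A_Iconv0.
(* [b] maps onto [A] but may also hit sequences outside [A]; those are
   replaced by the zero sequence. *)
pose a k : nat -> Real := if pselect (A (b k)) is left _ then b k else cst 0.
have a_Iconv0 k : Iconv0 I (a k).
  rewrite /a; case: pselect => [/A_Iconv0 //|_ e e0].
  apply: (idealS hI (ideal_finite hI (finite_set0 _))) => n /=.
  by rewrite normr0 leNgt e0.
exists (majorant a); split.
- exact: majorant_gt0.
- exact: majorant_Iconv0 hI a_Iconv0.
- move=> x Ax; have [k _ bkx] := A_b x Ax.
  have -> : x = a k by rewrite /a; case: pselect => // -[]; rewrite bkx.
  exact: majorant_dominates hI a_Iconv0 k.
Qed.

Section ideal_convergence.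
Variables (I : set (set nat)) (X : Type) (f : nat -> X -> Real).
Hypothesis hI : is_ideal I.

Lemma Isigma_u_Ip : I_sigma_u I f -> I_p I f.
Proof.
move=> [Xk [Xk_cover Xk_u]] x e e0.
have [k _ Xkx] : (\bigcup_k Xk k) x by rewrite Xk_cover.
by apply: (idealS hI (Xk_u k e e0)) => n /= le_efx; exists x.
Qed.

Lemma Iqn_Ip : I_qn I f -> I_p I f.
Proof.
move=> [eps [eps_gt0 eps_Iconv0 f_eps]] x e e0.
apply: (idealS hI (idealU hI (f_eps x) (eps_Iconv0 e e0))) => n /= le_efx.
have [le_eps|lt_eps] := lerP (eps n) `|f n x|; [by left | right].
by rewrite ger0_norm; [lra | exact/ltW/eps_gt0].
Qed.

Hypothesis f_traces : countable (range (fun x n => f n x)).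

Lemma Ip_Isigma_u : I_p I f -> I_sigma_u I f.
Proof.
move=> fp; have /countable_injP[c c_inj] := f_traces.
pose code x := c (fun n => f n x).
have trace_in x : (fun n => f n x) \in range (fun x n => f n x).
  by rewrite inE; exists x.
have code_eq x y : code x = code y -> forall n, f n x = f n y.
  by move=> /(c_inj _ _ (trace_in x) (trace_in y)) + n => /(congr1 (@^~ n)).
exists (fun k => [set x | code x = k]); split.
  by apply/seteqP; split => // x _; exists (code x).
move=> k e e0; have [[x0 <-]|no_k] := pselect (exists x0, code x0 = k).
  by apply: (idealS hI (fp x0 e e0)) => n [x /code_eq ->].
apply: (idealS hI (ideal_finite hI (finite_set0 _))) => n [x xk].
by case: no_k; exists x.
Qed.

Lemma Ip_Iqn : I_p I f -> I_qn I f.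
Proof.
move=> fp; have [|eps [eps_gt0 eps_Iconv0 eps_dom]] :=
  countable_Iconv0_majorant hI f_traces.
  by move=> _ [x _ <-]; exact: fp.
by exists eps; split => // x; apply: eps_dom; exists x.
Qed.

End ideal_convergence.

Lemma in_classes_of_countable_traces (I : set (set nat)) (X : topologicalType) :
  is_ideal I -> normal_T2 X ->
  (forall f : nat -> X -> Real, (forall n, continuous (f n)) ->
    countable (range (fun x n => f n x))) ->
  [/\ in_class (I_p I) (I_sigma_u I) X, in_class (I_p I) (I_qn I) X
    & in_class (I_qn I) (I_sigma_u I) X].
Proof.
move=> hI X_normal X_traces.
split; split=> // f /X_traces f_traces; split.
- exact: Ip_Isigma_u.
- exact: Isigma_u_Ip.
- exact: Ip_Iqn.
- exact: Iqn_Ip.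
- by move/(Iqn_Ip hI)/(Ip_Isigma_u hI f_traces).
- by move/(Isigma_u_Ip hI)/(Ip_Iqn hI f_traces).
Qed.

Definition fortissimo (T : Type) : Type := T.

Section fortissimo.
Variable T : pointedType.
HB.instance Definition _ := Pointed.on (fortissimo T).

Definition fortissimo_open (U : set (fortissimo T)) := U point -> countable (~` U).

Lemma fortissimo_openT : fortissimo_open setT.
Proof. by rewrite /fortissimo_open setCT. Qed.

Lemma fortissimo_openI : setI_closed fortissimo_open.
Proof.
by move=> A B oA oB [/oA cA /oB cB]; rewrite setCI; exact: countable_setU.
Qed.

Lemma fortissimo_open_bigcup (J : Type) (U : J -> set (fortissimo T)) :
  (forall j, fortissimo_open (U j)) -> fortissimo_open (\bigcup_j U j).
Proof.
move=> oU [j _ /oU cU]; apply: sub_countable cU; apply: subset_card_le.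
by move=> x nUx Ujx; apply: nUx; exists j.
Qed.

HB.instance Definition _ := isOpenTopological.Build (fortissimo T)
  fortissimo_openT fortissimo_openI fortissimo_open_bigcup.

Lemma fortissimo_openE (U : set (fortissimo T)) : open U = fortissimo_open U.
Proof. by []. Qed.

Lemma fortissimo_nbhs_point (U : set (fortissimo T)) :
  nbhs (point : fortissimo T) U -> countable (~` U).
Proof.
rewrite nbhsE => -[B [oB Bp] BU]; apply: sub_countable (oB Bp).
by apply: subset_card_le => x nUx Bx; exact: nUx (BU _ Bx).
Qed.

Lemma fortissimo_closed1 (x : fortissimo T) : closed [set x].
Proof. by rewrite -openC fortissimo_openE /fortissimo_open setCK. Qed.

Lemma fortissimo_separated (A B : set (fortissimo T)) :
  closed A -> closed B -> A `&` B = set0 ->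
  exists U V : set (fortissimo T),
    [/\ open U, open V, A `<=` U, B `<=` V & U `&` V = set0].
Proof.
wlog Bp : A B / ~ B point => [hwlog cA cB AB|cA cB AB].
  have [Bp|nBp] := pselect (B point); last exact: hwlog nBp cA cB AB.
  have Ap : ~ A point by move=> Ap; have : (A `&` B) point by []; rewrite AB.
  have [|U [V [oU oV BU AV UV]]] := hwlog B A Ap cB cA; first by rewrite setIC.
  by exists V, U; split; rewrite // setIC.
exists (~` B), B; split => //; first by rewrite openC.
  by move=> x Ax Bx; have : (A `&` B) x by []; rewrite AB.
by rewrite setICl.
Qed.

Lemma fortissimo_normal : normal_T2 (fortissimo T).
Proof.
split; last exact: fortissimo_separated.
rewrite open_hausdorff => x y xy.
have [|U [V [oU oV xU yV UV]]] := fortissimo_separated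
  (@fortissimo_closed1 x) (@fortissimo_closed1 y).
  by apply/seteqP; split => // z [-> zy]; move: xy; rewrite zy eqxx.
by exists (U, V); split; rewrite ?inE ?UV //; [exact: xU | exact: yV].
Qed.

Lemma continuous_fortissimo_countable (g : fortissimo T -> Real) :
  continuous g -> countable [set x | g x != g point].
Proof.
move=> g_cont; apply: (@sub_countable _ _ _
  (\bigcup_m ~` (g @^-1` ball (g point) (harmonic m)))).
  apply: subset_card_le => x /= gx.
  have gx_gt0 : 0 < `|g point - g x| by rewrite normr_gt0 subr_eq0 eq_sym.
  have [m hm] := harmonic_lt_eventually gx_gt0.
  by exists m => //=; rewrite /ball /= ltNge => /negP; apply; exact/ltW/hm.
apply: bigcup_countable => // m _; apply: fortissimo_nbhs_point.
exact: g_cont _ _ (nbhsx_ballx _ _ (harmonic_gt0 m)).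
Qed.

Lemma fortissimo_countable_traces (f : nat -> fortissimo T -> Real) :
  (forall n, continuous (f n)) -> countable (range (fun x n => f n x)).
Proof.
move=> f_cont; pose D := \bigcup_n [set x | f n x != f n point].
have D_countable : countable D.
  by apply: bigcup_countable => // n _; exact: continuous_fortissimo_countable.
apply: (@sub_countable _ _ _
  ((fun n => f n point) |` ((fun x n => f n x) @` D))).
  apply: subset_card_le => _ [x _ <-].
  have [Dx|nDx] := pselect (D x); first by right; exists x.
  left; apply/funext => n; apply/eqP; apply: contrapT => /negP fx.
  by apply: nDx; exists n.
apply: countable_setU => //; exact: sub_countable (card_image_le _ _) D_countable.
Qed.

End fortissimo.

Lemma discrete_normal (X : discreteTopologicalType) : normal_T2 X.
Proof.
split; first exact: discrete_hausdorff.
by move=> A B _ _ AB; exists A, B; split => //; exact: discrete_open.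
Qed.

Theorem corollary6p5 (I : set (set nat)) (hI : is_ideal I) (K : Type) :
  [/\ exists X : topologicalType,
        in_class (I_p I) (I_sigma_u I) X /\ same_card X K,
      exists X : topologicalType,
        in_class (I_p I) (I_qn I) X /\ same_card X K
    & exists X : topologicalType,
        in_class (I_qn I) (I_sigma_u I) X /\ same_card X K].
Proof.
have card_id (X : topologicalType) : X = K :> Type -> same_card X K.
  by move=> <-; exists id; exists id.
elim/Ppointed: K card_id => K card_id.
- have traces (f : nat -> discrete_topology K -> Real) :
      (forall n, continuous (f n)) -> countable (range (fun x n => f n x)).
    by move=> _; exact: sub_countable (card_image_le _ _) (countableP _).
  have [? ? ?] := in_classes_of_countable_traces hI (discrete_normal _) traces.
  by split; exists (discrete_topology K); split => //; exact: card_id.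
- have [? ? ?] := in_classes_of_countable_traces hI (fortissimo_normal K)
    (@fortissimo_countable_traces K).
  by split; exists (fortissimo K); split => //; exact: card_id.
Qed.
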